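(* Let $r$ be a positive integer and let $M\in\{0,1\}^{n\times n}$ with $\operatorname{rank}(M)\leq r$. Let $d=|M|/n$ and let $\Delta$ be the maximum number of $1$ entries in a row or column of $M$. If $d\leq n/2$ and $\Delta\leq 1.1d$, then $$\operatorname{pdisc}(M)\geq\frac{d^{1/2}n^{3/2}}{7\sqrt{r}}.$$
   Context: $|M|$ is the number of $1$ entries of $M$; let $N=2n$ and $p=|M|/n^2$. The symmetrization of $M$ is the symmetric matrix $A\in\mathbb{R}^{N\times N}$ with $A_{i,j+n}=A_{j+n,i}=M_{i,j}$ and all other entries $0$. $L\in\mathbb{R}^{N\times N}$ is the adjacency matrix of the complete bipartite graph with parts $[n]$ and $[n+1,N]$. For $X\in\mathbb{R}^{N\times N}$, $\operatorname{disc}(X)=\langle X,A\rangle-p\langle X,L\rangle$ (entrywise inner product), and $\operatorname{pdisc}(M)=\max\{\operatorname{disc}(X): X\text{ symmetric positive semidefinite},\ X_{i,i}\leq1\ \forall i\}$. *)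

From HB Require Import structures.
From mathcomp Require Import all_boot all_order all_algebra.
From mathcomp Require Import boolp classical_sets reals.
Set Implicit Arguments. Unset Strict Implicit. Unset Printing Implicit Defensive.
Import Order.TTheory GRing.Theory Num.Theory.
Local Open Scope ring_scope.

Section Defs.
Variable R : realType.

Definition is01 (n : nat) (M : 'M[R]_n) : Prop :=
  forall i j, M i j = 0 \/ M i j = 1.

Definition nnz (n : nat) (M : 'M[R]_n) : nat :=
  #|[set ij : 'I_n * 'I_n | M ij.1 ij.2 == 1]|.

Definition maxdeg (n : nat) (M : 'M[R]_n) : nat :=
  maxn (\max_(i < n) #|[set j : 'I_n | M i j == 1%R]|)
       (\max_(j < n) #|[set i : 'I_n | M i j == 1%R]|).

Definition symmetrization (n : nat) (M : 'M[R]_n) : 'M[R]_(n + n) :=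
  block_mx 0 M M^T 0.

Definition Kbip (n : nat) : 'M[R]_(n + n) :=
  block_mx 0 (const_mx 1) (const_mx 1) 0.

Definition inner (m : nat) (X Y : 'M[R]_m) : R :=
  \sum_(i < m) \sum_(j < m) X i j * Y i j.

Definition psd (m : nat) (X : 'M[R]_m) : Prop :=
  X^T = X /\ forall v : 'rV[R]_m, 0 <= (v *m X *m v^T) 0 0.

Definition disc (n : nat) (M : 'M[R]_n) (X : 'M[R]_(n + n)) : R :=
  inner X (symmetrization M)
  - ((nnz M)%:R / (n%:R ^+ 2)) * inner X (Kbip n).

Definition pdisc (n : nat) (M : 'M[R]_n) : R :=
  sup [set x : R | exists X : 'M[R]_(n + n),
         [/\ psd X, (forall i, X i i <= 1) & x = disc M X]].

End Defs.

From HB Require Import structures.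
From mathcomp Require Import all_boot all_order all_algebra.
From mathcomp Require Import boolp classical_sets reals.
From mathcomp Require Import ring lra zify.
Set Implicit Arguments. Unset Strict Implicit. Unset Printing Implicit Defensive.
Import Order.TTheory GRing.Theory Num.Theory.
Local Open Scope ring_scope.

(* Let p = |M| / n^2 and B = M - p J, a matrix of rank at most r + 1.  Factor
   B = L Q with Q row-free and put G = Q Q^T.  The Gram matrix, in the metric G,
   of the rows of L and the columns of G^-1 Q is positive semidefinite; its
   off-diagonal block is B, its upper diagonal holds the squared row norms of B
   and its lower diagonal Y has trace rank B.  Normalising its diagonal gives a
   feasible X with disc M X = 2 sum_ij B_ij^2 / (|B_i| sqrt Y_j).  The degree
   bound makes every row and column norm of B at most sqrt (1.1 d), and the
   tangent-line bound 1/t >= 3/(2 y0) - t^2/(2 y0^3), summed with the column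
   norms as weights and combined with sum_j Y_j <= 2r, gives the estimate. *)

Lemma quad_form_ge0_sqr_le (R : realFieldType) (a b c : R) :
  (forall x y, 0 <= x * x * a + 2 * x * y * b + y * y * c) -> b ^+ 2 <= a * c.
Proof.
move=> q; have a0 : 0 <= a by have := q 1 0; nra.
have c0 : 0 <= c by have := q 0 1; nra.
have [c_eq0|c_neq0] := eqVneq c 0.
  by have := q b (- (a + 1)); rewrite c_eq0; nra.
have c_gt0 : 0 < c by rewrite lt_def c_neq0.
rewrite -(ler_pM2l c_gt0); have := q c (- b); nra.
Qed.

Section Psd.
Variable R : realType.
Implicit Types m k : nat.

Lemma qf_delta m (P : 'M[R]_m) (a b : 'I_m) :
  ((delta_mx 0 a : 'rV[R]_m) *m P *m (delta_mx 0 b : 'rV[R]_m)^T) 0 0 = P a b.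
Proof. by rewrite -rowE trmx_delta -colE !mxE. Qed.

Lemma psd_entryC m (P : 'M[R]_m) a b : psd P -> P b a = P a b.
Proof. by case=> /(congr1 (fun A : 'M[R]_m => A a b)); rewrite mxE. Qed.

Lemma psd_diag_ge0 m (P : 'M[R]_m) a : psd P -> 0 <= P a a.
Proof. by case=> _ /(_ (delta_mx 0 a)); rewrite qf_delta. Qed.

Lemma psd_qf2 m (P : 'M[R]_m) a b x y : psd P ->
  0 <= x * x * P a a + 2 * x * y * P a b + y * y * P b b.
Proof.
move=> psdP; have := psdP.2 (x *: delta_mx 0 a + y *: delta_mx 0 b).
rewrite -trace_mx11 linearD /= !linearZ /= !mulmxDl !mulmxDr -!scalemxAl.
rewrite -!scalemxAr !mxtraceD !mxtraceZ !trace_mx11 !qf_delta (psd_entryC b a psdP).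
congr (0 <= _); ring.
Qed.

Lemma psd_entry_sqr_le m (P : 'M[R]_m) a b : psd P -> P a b ^+ 2 <= P a a * P b b.
Proof. by move=> psdP; apply: quad_form_ge0_sqr_le => x y; exact: psd_qf2. Qed.

Lemma psd_entry_le1 m (P : 'M[R]_m) a b :
  psd P -> (forall c, P c c <= 1) -> `|P a b| <= 1.
Proof.
move=> psdP P_le1; rewrite -(expr_le1 (n := 2)) // real_normK ?num_real //.
apply: le_trans (psd_entry_sqr_le a b psdP) _.
by rewrite mulr_ile1 ?psd_diag_ge0.
Qed.

Lemma psd_congr m k (S : 'M[R]_k) (A : 'M[R]_(m, k)) :
  psd S -> psd (A *m S *m A^T).
Proof.
case=> S_sym S_qf; split; first by rewrite !trmx_mul trmxK S_sym mulmxA.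
by move=> v; have := S_qf (v *m A); rewrite trmx_mul !mulmxA.
Qed.

Lemma mulmx_tr_row00 k (u : 'rV[R]_k) : (u *m u^T) 0 0 = \sum_i u 0 i ^+ 2.
Proof. by rewrite mxE; apply: eq_bigr => i _; rewrite mxE expr2. Qed.

Lemma psd_gram k m (Q : 'M[R]_(k, m)) : psd (Q *m Q^T).
Proof.
split; first by rewrite trmx_mul trmxK.
move=> v; rewrite mulmxA -[_ *m v^T]mulmxA -trmx_mul mulmx_tr_row00.
by apply: sumr_ge0 => i _; exact: sqr_ge0.
Qed.

Lemma row_free_gram_unit k m (Q : 'M[R]_(k, m)) : row_free Q -> Q *m Q^T \in unitmx.
Proof.
move=> Q_free; rewrite -row_free_unit; apply: inj_row_free => v vG0.
have : (v *m Q) *m (v *m Q)^T = 0 by rewrite trmx_mul !mulmxA -(mulmxA v) vG0 mul0mx.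
move/(congr1 (fun A : 'M[R]_1 => A 0 0)); rewrite mulmx_tr_row00 mxE.
move/psumr_eq0P => vQ0; apply/eqP; rewrite -(mulmx_free_eq0 _ Q_free); apply/eqP.
apply/rowP => i; apply/eqP; rewrite [X in _ == X]mxE -sqrf_eq0; apply/eqP.
by apply: vQ0 => // j _; exact: sqr_ge0.
Qed.

(* A zero diagonal entry yields the junk value (sqrt 0)^-1 = 0, which zeroes
   its row and column. *)
Definition normalize_diag m (P : 'M[R]_m) : 'M[R]_m :=
  \matrix_(a, b) ((Num.sqrt (P a a))^-1 * P a b * (Num.sqrt (P b b))^-1).

Lemma psd_normalize_diag m (P : 'M[R]_m) : psd P -> psd (normalize_diag P).
Proof.
set s := \row_a (Num.sqrt (P a a))^-1.
have -> : normalize_diag P = diag_mx s *m P *m (diag_mx s)^T.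
  by apply/matrixP => a b; rewrite tr_diag_mx mul_diag_mx mul_mx_diag !mxE.
exact: psd_congr.
Qed.

Lemma normalize_diag_le1 m (P : 'M[R]_m) a : psd P -> normalize_diag P a a <= 1.
Proof.
move=> psdP; rewrite mxE; have := psd_diag_ge0 a psdP.
rewrite le0r => /orP[/eqP->|Paa_gt0]; first by rewrite mulr0 mul0r.
by rewrite mulrC mulrA -expr2 exprVn sqr_sqrtr ?mulVf ?gt_eqF // ltW.
Qed.

End Psd.

Section Discrepancy.
Variable R : realType.

Lemma inner_norm_le m (X C : 'M[R]_m) :
  (forall a b, `|X a b| <= 1) -> inner X C <= \sum_a \sum_b `|C a b|.
Proof.
move=> X_le1; apply: ler_sum => a _; apply: ler_sum => b _.
by apply: le_trans (ler_norm _) _; rewrite normrM ler_piMl.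
Qed.

Variables (n : nat) (M : 'M[R]_n).

Lemma disc_inner X :
  disc M X = inner X (symmetrization M - ((nnz M)%:R / n%:R ^+ 2) *: Kbip R n).
Proof.
rewrite /disc /inner mulr_sumr -sumrB; apply: eq_bigr => a _.
by rewrite mulr_sumr -sumrB; apply: eq_bigr => b _; rewrite !mxE; ring.
Qed.

Lemma disc_le_pdisc X : psd X -> (forall a, X a a <= 1) -> disc M X <= pdisc M.
Proof.
(* [sup] of an unbounded set is a junk value, hence the explicit bound. *)
move=> psdX X_le1; apply: ub_le_sup; last by exists X.
exists (\sum_a \sum_b
  `|(symmetrization M - ((nnz M)%:R / n%:R ^+ 2) *: Kbip R n) a b|).
move=> _ [Y [psdY Y_le1 ->]]; rewrite disc_inner.
by apply: inner_norm_le => a b; exact: psd_entry_le1.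
Qed.

Lemma pdisc_ge0 : 0 <= pdisc M.
Proof.
have psd0 : psd (0 : 'M[R]_(n + n)).
  by split=> [|v]; rewrite ?trmx0 // mulmx0 mul0mx mxE.
apply: le_trans (disc_le_pdisc psd0 _); last by move=> a; rewrite mxE.
by rewrite disc_inner /inner big1 // => a _; rewrite big1 // => b _; rewrite mxE mul0r.
Qed.

Lemma inner_block_sym (X : 'M[R]_(n + n)) (C : 'M[R]_n) : X^T = X ->
  inner X (block_mx 0 C C^T 0)
    = 2 * \sum_i \sum_j X (lshift n i) (rshift n j) * C i j.
Proof.
move=> X_sym; have X_dl i j : X (rshift n j) (lshift n i) = X (lshift n i) (rshift n j).
  by rewrite -{1}X_sym mxE.
rewrite /inner big_split_ord /=.
under eq_bigr do rewrite big_split_ord /=.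
under [S in _ + S = _]eq_bigr do rewrite big_split_ord /=.
rewrite !big_split /=.
under eq_bigr do under eq_bigr do rewrite block_mxEul mxE mulr0.
under [S in _ + S + _ = _]eq_bigr do under eq_bigr do rewrite block_mxEur.
under [S in _ + (S + _) = _]eq_bigr do under eq_bigr do rewrite block_mxEdl mxE X_dl.
under [S in _ + (_ + S) = _]eq_bigr do under eq_bigr do rewrite block_mxEdr mxE mulr0.
by rewrite [S in _ + (S + _)]exchange_big /= !big1_eq add0r addr0 mulr_natl mulr2n.
Qed.

Lemma disc_block_sym X : X^T = X ->
  disc M X = 2 * \sum_i \sum_j
    X (lshift n i) (rshift n j) * (M i j - (nnz M)%:R / n%:R ^+ 2).
Proof.
move=> X_sym; rewrite /disc /symmetrization inner_block_sym //.
have -> : Kbip R n = block_mx 0 (const_mx 1) (const_mx 1)^T 0 by rewrite trmx_const.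
rewrite inner_block_sym // mulrCA -mulrBr; congr (2 * _).
rewrite mulr_sumr -sumrB; apply: eq_bigr => i _.
by rewrite mulr_sumr -sumrB; apply: eq_bigr => j _; rewrite mxE; ring.
Qed.

End Discrepancy.

Section GramConstruction.
Variables (R : realType) (n : nat) (B : 'M[R]_n).

Lemma gram_block_psd : exists P : 'M[R]_(n + n),
  [/\ psd P, forall i j, P (lshift n i) (rshift n j) = B i j,
      forall i, P (lshift n i) (lshift n i) = \sum_j B i j ^+ 2
    & \sum_j P (rshift n j) (rshift n j) = (\rank B)%:R].
Proof.
set L := col_base B; set Q := row_base B; set G := Q *m Q^T; set Gi := invmx G.
have G_unit : G \in unitmx := row_free_gram_unit (row_base_free B).
have G_sym : G^T = G by rewrite /G trmx_mul trmxK.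
have Gi_sym : Gi^T = Gi by rewrite /Gi trmx_inv G_sym.
have GGi : G *m Gi = 1%:M by rewrite mulmxV.
have GiG : Gi *m G = 1%:M by rewrite mulVmx.
have LQ : L *m Q = B := mulmx_base B.
set V := col_mx L (Q^T *m Gi).
have P_eq : V *m G *m V^T = block_mx (B *m B^T) B B^T (Q^T *m Gi *m Q).
  rewrite /V mul_col_mx tr_col_mx mul_col_row [(_ *m Gi)^T]trmx_mul Gi_sym trmxK.
  congr block_mx.
  - by rewrite /G (mulmxA L Q) -(mulmxA (L *m Q)) -trmx_mul LQ.
  - by rewrite -(mulmxA L G) (mulmxA G Gi Q) GGi mul1mx LQ.
  - by rewrite -(mulmxA Q^T Gi G) GiG mulmx1 -trmx_mul LQ.
  - by rewrite -(mulmxA Q^T Gi G) GiG mulmx1 mulmxA.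
exists (block_mx (B *m B^T) B B^T (Q^T *m Gi *m Q)); split.
- by rewrite -P_eq; exact: psd_congr (psd_gram Q).
- by move=> i j; rewrite block_mxEur.
- move=> i; rewrite block_mxEul mxE.
  by apply: eq_bigr => j _; rewrite mxE expr2.
- under eq_bigr do rewrite block_mxEdr.
  by rewrite -/(\tr _) mxtrace_mulC mulmxA GGi mxtrace1.
Qed.

Lemma feasible_of_rank : exists (X : 'M[R]_(n + n)) (Y : 'I_n -> R),
  [/\ psd X, forall a, X a a <= 1,
      forall i j, X (lshift n i) (rshift n j)
        = B i j / (Num.sqrt (\sum_l B i l ^+ 2) * Num.sqrt (Y j))
    & [/\ forall j, 0 <= Y j, \sum_j Y j = (\rank B)%:R
        & forall j, Y j = 0 -> forall i, B i j = 0]].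
Proof.
have [P [psdP P_ur P_ul trP]] := gram_block_psd.
exists (normalize_diag P), (fun j => P (rshift n j) (rshift n j)); split.
- exact: psd_normalize_diag.
- by move=> a; exact: normalize_diag_le1.
- by move=> i j; rewrite mxE P_ur P_ul invfM; ring.
split=> // [j|j Y0 i]; first exact: psd_diag_ge0.
have := psd_entry_sqr_le (lshift n i) (rshift n j) psdP.
by rewrite Y0 mulr0 P_ur => B2_le0; apply/eqP; rewrite -sqrf_eq0 eq_le B2_le0 sqr_ge0.
Qed.

End GramConstruction.

Lemma sum01_card (R : nzRingType) (T : finType) (f : T -> R) :
  (forall j, f j = 0 \/ f j = 1) -> \sum_j f j = #|[set j | f j == 1]|%:R.
Proof.
move=> f01; rewrite -sum1_card natr_sum [RHS]big_mkcond /=.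
apply: eq_bigr => j _; rewrite inE.
by case: (f01 j) => ->; rewrite ?eqxx // eq_sym oner_eq0.
Qed.

Lemma sum_sqr_sub01 (R : comPzRingType) (T : finType) (f : T -> R) (p : R) :
  (forall j, f j = 0 \/ f j = 1) ->
  \sum_j (f j - p) ^+ 2 = (1 - 2 * p) * \sum_j f j + #|T|%:R * p ^+ 2.
Proof.
move=> f01; transitivity (\sum_j ((1 - 2 * p) * f j + p ^+ 2)).
  by apply: eq_bigr => j _; case: (f01 j) => ->; ring.
by rewrite big_split /= -mulr_sumr sumr_const (mulr_natl (p ^+ 2)).
Qed.

Lemma sum_sqr_sub01_le (R : realFieldType) (T : finType) (f : T -> R) (p D : R) :
  (forall j, f j = 0 \/ f j = 1) -> 0 <= p -> p <= 1 / 2 -> \sum_j f j <= D ->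
  #|T|%:R * p ^+ 2 <= 2 * p * D -> \sum_j (f j - p) ^+ 2 <= D.
Proof.
move=> f01 p_ge0 p_le sumf_le cardp_le; rewrite sum_sqr_sub01 //.
have : (1 - 2 * p) * \sum_j f j <= (1 - 2 * p) * D by rewrite ler_wpM2l // subr_ge0; lra.
lra.
Qed.

Lemma rank_sub_const (F : fieldType) n (M : 'M[F]_n) (c : F) :
  (\rank (M - const_mx c)%R <= (\rank M).+1)%N.
Proof.
have -> : M - const_mx c = M + (const_mx (- c) : 'cV_n) *m (const_mx 1 : 'rV_n).
  by apply/matrixP => i j; rewrite !mxE big_ord1 !mxE mulr1.
apply: leq_trans (mxrank_add _ _) _; rewrite -[(\rank M).+1]addn1 leq_add2l.
exact: leq_trans (mxrankM_maxl _ _) (rank_leq_col _).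
Qed.

Section ZeroOne.
Variables (R : realType) (n : nat) (M : 'M[R]_n).
Hypothesis M01 : is01 M.

Lemma nnz_sum : (nnz M)%:R = \sum_i \sum_j M i j.
Proof. by rewrite pair_big /= sum01_card // => -[i j]; exact: M01. Qed.

Lemma row_sum_le_maxdeg i : \sum_j M i j <= (maxdeg M)%:R.
Proof.
rewrite sum01_card ?ler_nat => [|j]; last exact: M01.
apply: leq_trans (leq_maxl _ _).
exact: (@leq_bigmax _ (fun i => #|[set j | M i j == 1]|) i).
Qed.

Lemma col_sum_le_maxdeg j : \sum_i M i j <= (maxdeg M)%:R.
Proof.
rewrite sum01_card ?ler_nat => [|i]; last exact: M01.
apply: leq_trans (leq_maxr _ _).
exact: (@leq_bigmax _ (fun j => #|[set i | M i j == 1]|) j).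
Qed.

End ZeroOne.

Section RealEstimates.
Variable R : rcfType.

(* With t = sqrt y, the difference of the two sides is
   (w (t - y0)^2 (t + 2 y0) + (W - w) t^3) / (2 t y0^3). *)
Lemma tangent_le_div_sqrt (w W y y0 : R) :
  0 <= w -> w <= W -> 0 <= y -> (y = 0 -> w = 0) -> 0 < y0 ->
  3 * w / (2 * y0) - W * y / (2 * y0 ^+ 3) <= w / Num.sqrt y.
Proof.
move=> w_ge0 w_le y_ge0 y0_w y0_gt0.
have [y_eq0|y_neq0] := eqVneq y 0.
  by rewrite y_eq0 (y0_w y_eq0) !mulr0 !mul0r subrr.
have t_gt0 : 0 < Num.sqrt y by rewrite sqrtr_gt0 lt_def y_neq0.
rewrite -subr_ge0 -[y in W * y](sqr_sqrtr y_ge0); set t := Num.sqrt y.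
have -> : w / t - (3 * w / (2 * y0) - W * t ^+ 2 / (2 * y0 ^+ 3))
    = (w * ((t - y0) ^+ 2 * (t + 2 * y0)) + (W - w) * t ^+ 3) / (2 * t * y0 ^+ 3).
  by field; rewrite ?mulf_neq0 ?gt_eqF ?exprn_gt0.
have t_ge0 := ltW t_gt0; have y0_ge0 := ltW y0_gt0.
apply: divr_ge0; last by rewrite !mulr_ge0 ?exprn_ge0.
apply: addr_ge0; apply: mulr_ge0; rewrite ?subr_ge0 ?exprn_ge0 //.
by rewrite mulr_ge0 ?sqr_ge0 ?addr_ge0 ?mulr_ge0.
Qed.

Lemma sqr_div_le_div_sqrt (x rho c : R) :
  0 < c -> x ^+ 2 <= rho -> rho <= c ^+ 2 -> x ^+ 2 / c <= x ^+ 2 / Num.sqrt rho.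
Proof.
move=> c_gt0 x_le rho_le; have [rho_eq0|rho_neq0] := eqVneq rho 0.
  have -> : x ^+ 2 = 0 by apply/eqP; rewrite eq_le sqr_ge0 andbT -rho_eq0.
  by rewrite !mul0r.
have rho_gt0 : 0 < rho by rewrite lt_def rho_neq0 (le_trans (sqr_ge0 x)).
apply: ler_wpM2l; first exact: sqr_ge0.
rewrite lef_pV2 ?posrE ?sqrtr_gt0 // -[leRHS](ger0_norm (ltW c_gt0)) -sqrtr_sqr.
by rewrite ler_sqrt ?sqr_ge0.
Qed.

Lemma sum_sqr_div_sqrt_ge n (b : 'I_n -> 'I_n -> R) (Y : 'I_n -> R) (c D y0 : R) :
  0 < c -> 0 < y0 ->
  (forall i, \sum_j b i j ^+ 2 <= c ^+ 2) -> (forall j, \sum_i b i j ^+ 2 <= D) ->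
  (forall j, 0 <= Y j) -> (forall j, Y j = 0 -> forall i, b i j = 0) ->
  (3 * (\sum_i \sum_j b i j ^+ 2) / (2 * y0) - D * (\sum_j Y j) / (2 * y0 ^+ 3)) / c
    <= \sum_i \sum_j b i j ^+ 2 / (Num.sqrt (\sum_l b i l ^+ 2) * Num.sqrt (Y j)).
Proof.
move=> c_gt0 y0_gt0 row_le col_le Y_ge0 Y0.
set w := fun j => \sum_i b i j ^+ 2.
have w_ge0 j : 0 <= w j by apply: sumr_ge0 => i _; exact: sqr_ge0.
apply: (@le_trans _ _ (\sum_j w j / c / Num.sqrt (Y j))); last first.
  rewrite exchange_big; apply: ler_sum => j _; rewrite /w !mulr_suml.
  apply: ler_sum => i _; rewrite invfM mulrA.
  apply: ler_wpM2r; first by rewrite invr_ge0 sqrtr_ge0.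
  apply: sqr_div_le_div_sqrt => //.
  by rewrite (bigD1 j) //= lerDl sumr_ge0 // => l _; exact: sqr_ge0.
under [X in _ <= X]eq_bigr do rewrite mulrAC.
rewrite -mulr_suml; apply: ler_wpM2r; first by rewrite invr_ge0 ltW.
rewrite exchange_big /= -/w !mulr_sumr !mulr_suml -sumrB.
apply: ler_sum => j _; apply: tangent_le_div_sqrt (w_ge0 j) (col_le j) (Y_ge0 j) _ y0_gt0.
by move=> /Y0 bj0; rewrite /w big1 // => i _; rewrite bj0 expr0n.
Qed.

End RealEstimates.

Section ShiftedMatrix.
Variables (R : realType) (n : nat) (M : 'M[R]_n).
Hypotheses (M01 : is01 M) (nnz_gt0 : (0 < nnz M)%N).

Let N : R := (nnz M)%:R.
Let d : R := N / n%:R.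
Let p : R := N / n%:R ^+ 2.

Lemma nnz_gt0_dim : (0 < n)%N.
Proof.
rewrite lt0n; apply: contraTneq nnz_gt0 => n0; rewrite -leqNgt.
by apply: leq_trans (max_card _) _; rewrite card_prod card_ord n0.
Qed.

Let n_gt0 : 0 < n%:R :> R. Proof. by rewrite ltr0n nnz_gt0_dim. Qed.
Let N_gt0 : 0 < N. Proof. by rewrite ltr0n. Qed.
Let p_eq : p = d / n%:R. Proof. by rewrite /p /d expr2 invfM mulrA. Qed.

Hypotheses (d_le : d <= n%:R / 2) (maxdeg_le : (maxdeg M)%:R <= 11 / 10 * d).

Let d_gt0 : 0 < d. Proof. exact: divr_gt0. Qed.
Let p_ge0 : 0 <= p. Proof. by rewrite p_eq divr_ge0 ?ltW. Qed.
Let p_le_half : p <= 1 / 2. Proof. by rewrite p_eq ler_pdivrMr // mul1r mulrC. Qed.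
Let np2_eq : #|'I_n|%:R * p ^+ 2 = d * p.
Proof. by rewrite card_ord p_eq; field; rewrite gt_eqF. Qed.

Let np2_le : #|'I_n|%:R * p ^+ 2 <= 2 * p * (11 / 10 * d).
Proof. by rewrite np2_eq; have := mulr_ge0 (ltW d_gt0) p_ge0; lra. Qed.

Lemma shifted_row_sqr_le i : \sum_j (M - const_mx p) i j ^+ 2 <= 11 / 10 * d.
Proof.
under eq_bigr do rewrite !mxE.
apply: sum_sqr_sub01_le (M01 i) _ _ _ np2_le => //.
exact: le_trans (row_sum_le_maxdeg M01 i) maxdeg_le.
Qed.

Lemma shifted_col_sqr_le j : \sum_i (M - const_mx p) i j ^+ 2 <= 11 / 10 * d.
Proof.
under eq_bigr do rewrite !mxE.
apply: sum_sqr_sub01_le (fun i => M01 i j) _ _ _ np2_le => //.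
exact: le_trans (col_sum_le_maxdeg M01 j) maxdeg_le.
Qed.

Lemma shifted_sqr_sum_ge : d * n%:R / 2 <= \sum_i \sum_j (M - const_mx p) i j ^+ 2.
Proof.
have row_eq i : \sum_j (M - const_mx p) i j ^+ 2 = (1 - 2 * p) * \sum_j M i j + d * p.
  by under eq_bigr do rewrite !mxE; rewrite sum_sqr_sub01 ?np2_eq.
rewrite (eq_bigr _ (fun i _ => row_eq i)) big_split /= -mulr_sumr -nnz_sum //.
rewrite sumr_const card_ord -(mulr_natr (d * p)) -/N.
have -> : (1 - 2 * p) * N + d * p * n%:R = d * n%:R - d * d.
  by rewrite /N p_eq /d; field; rewrite gt_eqF.
by have := ler_wpM2l (ltW d_gt0) d_le; lra.
Qed.

End ShiftedMatrix.

(* c = 11/10 sqrt d dominates the row norms sqrt (11/10 d), and y0 = 2 sqrt (r/n)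
   is close to the optimal tangency point sqrt (D k / S); the constant obtained
   is 19/44 > 1/7. *)
Lemma lemma3p3_numeric (R : rcfType) (d nR rR S k y0 : R) :
  0 < d -> 0 < nR -> 0 < rR -> d * nR / 2 <= S -> k <= 2 * rR ->
  y0 = 2 * Num.sqrt rR / Num.sqrt nR ->
  Num.sqrt d * Num.sqrt (nR ^+ 3) / (7 * Num.sqrt rR)
    <= 2 * ((3 * S / (2 * y0) - 11 / 10 * d * k / (2 * y0 ^+ 3))
            / (11 / 10 * Num.sqrt d)).
Proof.
move=> d_gt0 n_gt0 r_gt0 S_ge k_le y0E.
set a := Num.sqrt d in y0E *; set m := Num.sqrt nR in y0E *.
set q := Num.sqrt rR in y0E *.
have a_gt0 : 0 < a by rewrite sqrtr_gt0.
have m_gt0 : 0 < m by rewrite sqrtr_gt0.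
have q_gt0 : 0 < q by rewrite sqrtr_gt0.
have y0_gt0 : 0 < y0 by rewrite y0E divr_gt0 ?mulr_gt0.
have dE : d = a ^+ 2 by rewrite sqr_sqrtr ?ltW.
have nE : nR = m ^+ 2 by rewrite sqr_sqrtr ?ltW.
have rE : rR = q ^+ 2 by rewrite sqr_sqrtr ?ltW.
have -> : Num.sqrt (nR ^+ 3) = m ^+ 3.
  by rewrite nE -exprM mulnC exprM sqrtr_sqr ger0_norm // exprn_ge0 // ltW.
have inv_ge0 x : 0 < x -> 0 <= x^-1 by move=> x_gt0; rewrite invr_ge0 ltW.
clearbody a m q.
apply: (@le_trans _ _ (2 * ((3 * (d * nR / 2) / (2 * y0)
    - 11 / 10 * d * (2 * rR) / (2 * y0 ^+ 3)) / (11 / 10 * a)))).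
  have -> : a * m ^+ 3 / (7 * q) = a * m ^+ 3 / q * (1 / 7) by field; rewrite gt_eqF.
  have -> : 2 * ((3 * (d * nR / 2) / (2 * y0) - 11 / 10 * d * (2 * rR) / (2 * y0 ^+ 3))
      / (11 / 10 * a)) = a * m ^+ 3 / q * (19 / 44).
    by rewrite y0E dE nE rE; field; rewrite !gt_eqF.
  by apply: ler_wpM2l; [rewrite !mulr_ge0 ?exprn_ge0 ?inv_ge0 // ltW | lra].
apply: ler_wpM2l => //; apply: ler_wpM2r; first by apply: inv_ge0; lra.
apply: lerB; apply: ler_wpM2r.
- by apply: inv_ge0; rewrite mulr_gt0.
- exact: ler_wpM2l.
- by apply: inv_ge0; rewrite mulr_gt0 ?exprn_gt0.
- by apply: ler_wpM2l => //; lra.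
Qed.

Theorem lemma3p3 (R : realType) (n r : nat) (M : 'M[R]_n) :
  (0 < r)%N -> is01 M -> (\rank M <= r)%N ->
  let d : R := (nnz M)%:R / n%:R in
  d <= n%:R / 2 ->
  (maxdeg M)%:R <= (11 / 10) * d ->
  Num.sqrt d * Num.sqrt (n%:R ^+ 3) / (7 * Num.sqrt r%:R) <= pdisc M.
Proof.
move=> r_gt0 M01 rkM d d_le maxdeg_le.
have [nnz0|nnz_gt0] := posnP (nnz M).
  by rewrite /d nnz0 mul0r sqrtr0 !mul0r; exact: pdisc_ge0.
have n_gt0 : 0 < n%:R :> R by rewrite ltr0n (nnz_gt0_dim nnz_gt0).
have d_gt0 : 0 < d by rewrite divr_gt0 // ltr0n.
set p : R := (nnz M)%:R / n%:R ^+ 2; set B := M - const_mx p.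
have [X [Y [psdX X_le1 XE [Y_ge0 sumY Y0]]]] := feasible_of_rank B.
apply: le_trans (disc_le_pdisc M psdX X_le1).
rewrite disc_block_sym; last exact: psdX.1.
have BE i j : M i j - p = B i j by rewrite !mxE.
under eq_bigr do under eq_bigr do rewrite XE BE mulrAC -expr2.
have rkB : (\rank B)%:R <= 2 * r%:R :> R.
  by rewrite -natrM ler_nat; have := rank_sub_const M p; rewrite -/B; lia.
apply: le_trans (ler_wpM2l _ (sum_sqr_div_sqrt_ge (c := 11 / 10 * Num.sqrt d)
  (D := 11 / 10 * d) (y0 := 2 * Num.sqrt r%:R / Num.sqrt n%:R) _ _ _ _ Y_ge0 Y0)).
- rewrite sumY; apply: (lemma3p3_numeric d_gt0 n_gt0 _ _ rkB) => //.
    by rewrite ltr0n.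
  exact: shifted_sqr_sum_ge M01 nnz_gt0 d_le.
- by [].
- by apply: mulr_gt0; [lra | rewrite sqrtr_gt0].
- by rewrite divr_gt0 ?mulr_gt0 ?sqrtr_gt0 // ltr0n.
- move=> i; apply: le_trans (shifted_row_sqr_le M01 nnz_gt0 d_le maxdeg_le i) _.
  rewrite exprMn sqr_sqrtr ?(ltW d_gt0) // expr2; rewrite -/d; lra.
- by move=> j; rewrite -/d; apply: shifted_col_sqr_le.
Qed.
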